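(* For a suitable choice of absolute constants $c_0>0$, $c_5>0$, the following holds: for $x\geqslant y\geqslant 2$ with $\psi(y)>2\log x$, every integer $q$ with $q\leqslant y^{c_0/\log_2y}$, every non-principal Dirichlet character $\chi$ modulo $q$ and every $\tau\in\mathbb R$, $$\Big|\frac{Z(\beta+i\tau,\chi;y)}{Z_q(\beta,y)}\Big|\leqslant e^{-c_5\mathcal W_q(y,\tau;\chi)}.$$
   Context: For a prime $p$, $\nu_p:=\lfloor\log y/\log p\rfloor$; $\psi(y):=\sum_{p\leqslant y}\nu_p\log p$; $\log_2=\log\log$. For $\Re s>0$, $Z_q(s,y):=\prod_{p\leqslant y,\,p\nmid q}\frac{1-p^{-(\nu_p+1)s}}{1-p^{-s}}$, $Z(s,y):=Z_1(s,y)$, and for a Dirichlet character $\chi$, $Z(s,\chi;y):=\prod_{p\leqslant y}\frac{1-\chi(p)^{\nu_p+1}p^{-(\nu_p+1)s}}{1-\chi(p)p^{-s}}$. When $\psi(y)>2\log x$, $\beta=\beta(x,y)$ is the unique $\sigma>0$ with $-Z'(\sigma,y)/Z(\sigma,y)=\log x$. Finally $\mathcal W_q(y,\tau;\chi):=\sum_{p\leqslant y,\,p\nmid q}\frac{\{1-\Re(\chi(p)p^{-i\tau})\}^2}{p^\beta}$. *)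

From Stdlib Require Import Reals Lra Lia ZArith Znumtheory Arith List.
From Coquelicot Require Import Coquelicot.
Open Scope R_scope.

Definition is_primeb (p : nat) : bool :=
  if prime_dec (Z.of_nat p) then true else false.
Definition primes_upto (y : R) : list nat :=
  filter is_primeb (seq 0 (S (Z.to_nat (Int_part y)))).

Definition nu (y : R) (p : nat) : nat := Z.to_nat (Int_part (ln y / ln (INR p))).

Definition sumR (l : list nat) (f : nat -> R) : R := fold_right (fun p acc => f p + acc) 0 l.
Definition prodR (l : list nat) (f : nat -> R) : R := fold_right (fun p acc => f p * acc) 1 l.
Definition prodC (l : list nat) (f : nat -> C) : C := fold_right (fun p acc => Cmult (f p) acc) (RtoC 1) l.

Definition psi (y : R) : R := sumR (primes_upto y) (fun p => INR (nu y p) * ln (INR p)).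

Definition cexp (z : C) : C := (exp (fst z) * cos (snd z), exp (fst z) * sin (snd z)).
Definition cpow_neg (a : R) (s : C) : C := cexp (Cmult (Copp s) (RtoC (ln a))).

Definition ndivb (q p : nat) : bool := negb (Nat.eqb (Nat.modulo q p) 0).

Definition Zq (q : nat) (s y : R) : R :=
  prodR (filter (ndivb q) (primes_upto y))
    (fun p => (1 - Rpower (INR p) (- (INR (nu y p + 1)) * s)) / (1 - Rpower (INR p) (- s))).
Definition Z1 (s y : R) : R := Zq 1 s y.

Definition Zchi (s : C) (chi : nat -> C) (y : R) : C :=
  prodC (primes_upto y)
    (fun p => Cdiv (Cminus (RtoC 1) (Cmult (Cpow (chi p) (nu y p + 1))
                                     (cpow_neg (INR p) (Cmult (RtoC (INR (nu y p + 1))) s))))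
                   (Cminus (RtoC 1) (Cmult (chi p) (cpow_neg (INR p) s)))).

Definition dirichlet_character (q : nat) (chi : nat -> C) : Prop :=
  (1 <= q)%nat /\
  chi 1%nat = RtoC 1 /\
  (forall m n : nat, chi (m * n)%nat = Cmult (chi m) (chi n)) /\
  (forall n : nat, chi (n + q)%nat = chi n) /\
  (forall n : nat, chi n = RtoC 0 <-> Nat.gcd n q <> 1%nat).

Definition non_principal (q : nat) (chi : nat -> C) : Prop :=
  exists n : nat, Nat.gcd n q = 1%nat /\ chi n <> RtoC 1.

Definition Wq (q : nat) (y tau beta : R) (chi : nat -> C) : R :=
  sumR (filter (ndivb q) (primes_upto y))
    (fun p => (1 - Re (Cmult (chi p) (cpow_neg (INR p) (0, tau)))) ^ 2 / Rpower (INR p) beta).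

Definition is_beta (x y sigma : R) : Prop :=
  0 < sigma /\ - Derive (fun s => Z1 s y) sigma / Z1 sigma y = ln x.

From Stdlib Require Import Reals Lra Lia Znumtheory List.
From Coquelicot Require Import Coquelicot.
Open Scope R_scope.

(* For p not dividing q the Euler factor of Z(beta + i tau, chi; y) at p is the geometric sum
   1 + z + ... + z^nu_p with z = r w, where r = p^-beta < 1 and w = chi(p) p^-i tau has
   modulus at most 1, while the corresponding factor of Z_q(beta, y) is the same sum at z = r.
   Since |1 + r w| <= (1 + r) (1 - r (1 - Re w) / 8), grouping the terms of the sum in pairs
   gives |1 + ... + (r w)^nu| <= (1 - r (1 - Re w) / 16) (1 + ... + r^nu)
   <= (1 + ... + r^nu) exp (- (1 - Re w)^2 r / 32).  For p dividing q, chi(p) = 0 and the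
   factor is 1. *)

Fixpoint geom_sumC (z : C) (n : nat) : C :=
  match n with O => 1%C | S k => (1 + z * geom_sumC z k)%C end.

Fixpoint geom_sumR (r : R) (n : nat) : R :=
  match n with O => 1 | S k => 1 + r * geom_sumR r k end.

Lemma geom_sumR_ge1 r n : 0 <= r -> 1 <= geom_sumR r n.
Proof. intros Hr; induction n; simpl; nra. Qed.

Lemma geom_sumC_closed z n : ((1 - z) * geom_sumC z n = 1 - z ^ S n)%C.
Proof.
  induction n as [|n IH]; [simpl; ring|].
  change (geom_sumC z (S n)) with (1 + z * geom_sumC z n)%C.
  change (z ^ S (S n))%C with (z * z ^ S n)%C.
  transitivity ((1 - z) + z * ((1 - z) * geom_sumC z n))%C; [ring|].
  rewrite IH; ring.
Qed.

Lemma geom_sumR_closed r n : (1 - r) * geom_sumR r n = 1 - r ^ S n.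
Proof.
  induction n as [|n IH]; [simpl; ring|].
  change (geom_sumR r (S n)) with (1 + r * geom_sumR r n).
  change (r ^ S (S n)) with (r * r ^ S n).
  transitivity ((1 - r) + r * ((1 - r) * geom_sumR r n)); [ring|].
  rewrite IH; ring.
Qed.

Lemma Cmod_geom_sumC_SS_le z n B : Cmod (geom_sumC z n) <= B ->
  Cmod (geom_sumC z (S (S n))) <= Cmod (1 + z) + Cmod z * Cmod z * B.
Proof.
  intros HB.
  replace (geom_sumC z (S (S n))) with ((1 + z) + (z * z) * geom_sumC z n)%C
    by (simpl; ring).
  eapply Rle_trans; [apply Cmod_triangle|].
  rewrite !Cmod_mult.
  assert (0 <= Cmod z) by apply Cmod_ge_0.
  assert (0 <= Cmod z * Cmod z) by nra.
  nra.
Qed.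

Lemma Re_between w : Cmod w <= 1 -> -1 <= Re w <= 1.
Proof.
  intros Hw; generalize (re_le_Cmod w); unfold Rabs.
  destruct (Rcase_abs (Re w)); lra.
Qed.

Lemma Cmod_scal_le r w : 0 <= r -> Cmod w <= 1 -> Cmod (RtoC r * w) <= r.
Proof.
  intros Hr Hw. rewrite Cmod_mult, Cmod_R, Rabs_pos_eq by lra.
  assert (0 <= Cmod w) by apply Cmod_ge_0. nra.
Qed.

Lemma Cmod_1_plus_scal_le r w : 0 < r < 1 -> Cmod w <= 1 ->
  Cmod (1 + RtoC r * w) <= (1 + r) * (1 - r * (1 - Re w) / 8).
Proof.
  intros Hr Hw.
  assert (Hw2 := Cmod2_alt w). assert (Hw0 := Cmod_ge_0 w).
  destruct w as [a b]; unfold Re, Im in *; cbn [fst snd] in *.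
  assert (Hab : a * a + b * b <= 1) by nra.
  assert (a <= 1 /\ -1 <= a) by nra.
  assert (HY : 0 <= (1 + r) * (1 - r * (1 - a) / 8)) by nra.
  rewrite <- (sqrt_square _ HY).
  unfold Cmod, Cplus, Cmult, RtoC; cbn [fst snd].
  apply sqrt_le_1_alt.
  (* With d = r (1 - a) >= 0: |1 + r w|^2 <= (1 + r)^2 - 2 d, while the square of the
     bound is at least (1 + r)^2 - (1 + r)^2 d / 4 >= (1 + r)^2 - d. *)
  assert (0 <= r * (1 - a)) by nra.
  assert ((1 + r) * (1 + r) <= 4) by nra.
  assert ((1 + r) * (1 + r) * (r * (1 - a)) <= 4 * (r * (1 - a))) by nra.
  assert (0 <= ((1 + r) * (r * (1 - a))) ^ 2) by apply pow2_ge_0.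
  assert (r * r * (a * a + b * b) <= r * r) by nra.
  nra.
Qed.

Lemma Cmod_geom_sumC_le_contract r w n : 0 < r < 1 -> Cmod w <= 1 -> (1 <= n)%nat ->
  Cmod (geom_sumC (RtoC r * w) n) <= (1 - r * (1 - Re w) / 16) * geom_sumR r n.
Proof.
  intros Hr Hw Hn.
  set (z := (RtoC r * w)%C).
  assert (Hz : Cmod z <= r) by (apply Cmod_scal_le; lra).
  assert (Hz0 : 0 <= Cmod z) by apply Cmod_ge_0.
  assert (Hzz : Cmod z * Cmod z <= r * r) by nra.
  assert (H1 := Cmod_1_plus_scal_le r w Hr Hw); fold z in H1.
  assert (HRe := Re_between w Hw).
  set (e := r * (1 - Re w) / 16) in *.
  assert (He : 0 <= e <= 1 / 8) by (unfold e; nra).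
  replace (r * (1 - Re w) / 8) with (2 * e) in H1 by (unfold e; field).
  assert (Hpairs : forall k,
    Cmod (geom_sumC z (S k)) <= (1 - e) * geom_sumR r (S k) /\
    Cmod (geom_sumC z (S (S k))) <= (1 - e) * geom_sumR r (S (S k))).
  { induction k as [|k [IH1 IH2]]; split.
    - simpl; rewrite Cmult_1_r; nra.
    - eapply Rle_trans; [apply (Cmod_geom_sumC_SS_le z 0 1); simpl; rewrite Cmod_1; lra|].
      simpl. assert (0 <= e * (1 + r - r * r)) by (apply Rmult_le_pos; nra). nra.
    - exact IH2.
    - eapply Rle_trans; [apply (Cmod_geom_sumC_SS_le z (S k) _ IH1)|].
      assert (1 <= geom_sumR r (S k)) by (apply geom_sumR_ge1; lra).
      assert (0 <= (1 - e) * geom_sumR r (S k)) by nra.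
      change (geom_sumR r (S (S (S k)))) with (1 + r * (1 + r * geom_sumR r (S k))).
      nra. }
  destruct n as [|n]; [lia|apply Hpairs].
Qed.

Lemma Cmod_geom_sumC_le_exp r w n : 0 < r < 1 -> Cmod w <= 1 -> (1 <= n)%nat ->
  Cmod (geom_sumC (RtoC r * w) n) <= geom_sumR r n * exp (- (1/32) * ((1 - Re w) ^ 2 * r)).
Proof.
  intros Hr Hw Hn.
  eapply Rle_trans; [apply Cmod_geom_sumC_le_contract; assumption|].
  assert (HRe := Re_between w Hw).
  assert (1 <= geom_sumR r n) by (apply geom_sumR_ge1; lra).
  assert (1 - r * (1 - Re w) / 16 <= exp (- (1/32) * ((1 - Re w) ^ 2 * r))).
  { eapply Rle_trans; [|apply exp_ineq1_le].
    assert (0 <= r * (1 - Re w) * (1 + Re w)) by (apply Rmult_le_pos; nra).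
    nra. }
  rewrite (Rmult_comm (geom_sumR r n)). apply Rmult_le_compat_r; lra.
Qed.

Lemma cexp_add a b : cexp (a + b) = (cexp a * cexp b)%C.
Proof.
  destruct a as [a1 a2], b as [b1 b2]; unfold cexp, Cplus, Cmult; cbn [fst snd].
  rewrite exp_plus, cos_plus, sin_plus.
  apply injective_projections; cbn [fst snd]; ring.
Qed.

Lemma cexp_0 : cexp 0 = 1%C.
Proof.
  unfold cexp, RtoC; cbn [fst snd]; rewrite exp_0, cos_0, sin_0.
  apply injective_projections; cbn [fst snd]; ring.
Qed.

Lemma cexp_nat_mul w n : cexp (RtoC (INR n) * w) = (cexp w ^ n)%C.
Proof.
  induction n as [|n IH].
  - replace (RtoC (INR 0) * w)%C with (RtoC 0) by (simpl; ring). apply cexp_0.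
  - replace (RtoC (INR (S n)) * w)%C with (w + RtoC (INR n) * w)%C
      by (rewrite S_INR, RtoC_plus; ring).
    rewrite cexp_add, IH; reflexivity.
Qed.

Lemma cpow_neg_nat_mul P s n : cpow_neg P (RtoC (INR n) * s) = (cpow_neg P s ^ n)%C.
Proof. unfold cpow_neg; rewrite <- cexp_nat_mul; f_equal; ring. Qed.

Lemma cpow_neg_real_imag P b t :
  cpow_neg P (b, t) = (RtoC (Rpower P (- b)) * cpow_neg P (0, t))%C.
Proof.
  unfold cpow_neg, cexp, Rpower, Copp, Cmult, RtoC; cbn [fst snd].
  replace (- 0 * ln P - - t * 0) with 0 by ring.
  replace (- b * ln P - - t * 0) with (- b * ln P) by ring.
  replace (- b * 0 + - t * ln P) with (- 0 * 0 + - t * ln P) by ring.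
  rewrite exp_0. apply injective_projections; cbn [fst snd]; ring.
Qed.

Lemma Cmod_cpow_neg_imag P t : Cmod (cpow_neg P (0, t)) = 1.
Proof.
  unfold cpow_neg, cexp, Cmod, Copp, Cmult, RtoC; cbn [fst snd].
  replace (- 0 * ln P - - t * 0) with 0 by ring. rewrite exp_0.
  assert (H := sin2_cos2 (- 0 * 0 + - t * ln P)); unfold Rsqr in H.
  rewrite !Rmult_1_l. replace (_ + _) with 1 by nra. apply sqrt_1.
Qed.

Definition euler_factor (c : C) (P : R) (n : nat) (s : C) : C :=
  ((1 - c ^ (n + 1) * cpow_neg P (RtoC (INR (n + 1)) * s)) / (1 - c * cpow_neg P s))%C.

Definition euler_factorR (P : R) (n : nat) (b : R) : R :=
  (1 - Rpower P (- INR (n + 1) * b)) / (1 - Rpower P (- b)).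

Lemma Rpower_opp_lt_1 P b : 1 < P -> 0 < b -> 0 < Rpower P (- b) < 1.
Proof.
  intros HP Hb. split; [apply exp_pos|].
  rewrite <- (Rpower_O P) by lra. apply Rpower_lt; lra.
Qed.

Lemma euler_factorR_geom P n b : 1 < P -> 0 < b ->
  euler_factorR P n b = geom_sumR (Rpower P (- b)) n.
Proof.
  intros HP Hb. unfold euler_factorR. set (r := Rpower P (- b)).
  assert (Hr : 0 < r < 1) by (apply Rpower_opp_lt_1; assumption).
  assert (Hrn : Rpower P (- INR (n + 1) * b) = r ^ S n).
  { unfold r. rewrite <- Rpower_pow by apply exp_pos. rewrite Rpower_mult.
    f_equal. rewrite Nat.add_1_r, S_INR. ring. }
  rewrite Hrn, <- geom_sumR_closed. field. lra.
Qed.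

Lemma euler_factorR_pos P n b : 1 < P -> 0 < b -> 0 < euler_factorR P n b.
Proof.
  intros HP Hb. rewrite euler_factorR_geom by assumption.
  assert (0 < Rpower P (- b) < 1) by (apply Rpower_opp_lt_1; assumption).
  assert (1 <= geom_sumR (Rpower P (- b)) n) by (apply geom_sumR_ge1; lra).
  lra.
Qed.

Lemma euler_factor_geom c P n b t : 1 < P -> 0 < b -> Cmod c <= 1 ->
  euler_factor c P n (b, t) =
  geom_sumC (RtoC (Rpower P (- b)) * (c * cpow_neg P (0, t))) n.
Proof.
  intros HP Hb Hc. set (z := (RtoC (Rpower P (- b)) * (c * cpow_neg P (0, t)))%C).
  assert (Hr := Rpower_opp_lt_1 P b HP Hb).
  assert (Hw : Cmod (c * cpow_neg P (0, t)) <= 1)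
    by (rewrite Cmod_mult, Cmod_cpow_neg_imag; lra).
  assert (Hz : Cmod z <= Rpower P (- b)) by (apply Cmod_scal_le; lra).
  assert (Hz1 : (1 - z)%C <> 0%C).
  { apply Cminus_eq_contra. intros E. rewrite <- E, Cmod_1 in Hz. lra. }
  assert (Hden : (c * cpow_neg P (b, t))%C = z)
    by (rewrite cpow_neg_real_imag; unfold z; ring).
  assert (Hnum : (c ^ (n + 1) * cpow_neg P (RtoC (INR (n + 1)) * (b, t)))%C = (z ^ S n)%C).
  { rewrite cpow_neg_nat_mul, Nat.add_1_r, <- Cpow_mult_l, Hden. reflexivity. }
  unfold euler_factor. rewrite Hnum, Hden, <- geom_sumC_closed. field. exact Hz1.
Qed.

Lemma Cmod_euler_factor_le c P n b t : 1 < P -> 0 < b -> Cmod c <= 1 -> (1 <= n)%nat ->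
  Cmod (euler_factor c P n (b, t)) <=
  euler_factorR P n b * exp (- (1/32) * ((1 - Re (c * cpow_neg P (0, t))) ^ 2 / Rpower P b)).
Proof.
  intros HP Hb Hc Hn.
  rewrite euler_factor_geom, euler_factorR_geom by assumption.
  unfold Rdiv. rewrite <- Rpower_Ropp.
  apply Cmod_geom_sumC_le_exp; [apply Rpower_opp_lt_1; assumption| |assumption].
  rewrite Cmod_mult, Cmod_cpow_neg_imag. lra.
Qed.

Lemma euler_factor_0 P n s : euler_factor 0 P n s = 1%C.
Proof.
  unfold euler_factor. rewrite Nat.add_1_r. simpl Cpow.
  rewrite !Cmult_0_l. unfold Cminus. rewrite Copp_0, !Cplus_0_r. field.
Qed.

Lemma dirichlet_character_pow q chi n k : dirichlet_character q chi ->
  chi (n ^ k)%nat = (chi n ^ k)%C.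
Proof.
  intros (_ & H1 & Hmul & _). induction k as [|k IH]; [exact H1|].
  simpl. rewrite Hmul, IH. reflexivity.
Qed.

Lemma dirichlet_character_periodic q chi a k : dirichlet_character q chi ->
  chi (a + k * q)%nat = chi a.
Proof.
  intros (_ & _ & _ & Hper & _). induction k as [|k IH].
  - rewrite Nat.add_0_r. reflexivity.
  - replace (a + S k * q)%nat with (a + k * q + q)%nat by lia. rewrite Hper. exact IH.
Qed.

Lemma sumR_nonneg l f : (forall k, 0 <= f k) -> 0 <= sumR l f.
Proof. intros Hf. induction l as [|a l IH]; simpl; [lra|]. specialize (Hf a). lra. Qed.

Lemma sumR_ge_term l f m : (forall k, 0 <= f k) -> In m l -> f m <= sumR l f.
Proof.
  intros Hf. induction l as [|a l IH]; simpl; [tauto|].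
  intros [<-|Hm].
  - assert (0 <= sumR l f) by (apply sumR_nonneg; exact Hf). lra.
  - specialize (IH Hm). specialize (Hf a). lra.
Qed.

(* A periodic function is bounded, and |chi n|^k = |chi (n^k)| must stay bounded. *)
Lemma dirichlet_character_Cmod_le_1 q chi n : dirichlet_character q chi -> Cmod (chi n) <= 1.
Proof.
  intros Hchi. assert (Hq : (1 <= q)%nat) by apply Hchi.
  set (M := sumR (seq 0 q) (fun m => Cmod (chi m))).
  assert (HM : forall m, Cmod (chi m) <= M).
  { intros m. rewrite (Nat.div_mod_eq m q), Nat.add_comm, Nat.mul_comm.
    rewrite dirichlet_character_periodic by exact Hchi.
    apply (sumR_ge_term (seq 0 q) (fun m => Cmod (chi m))); [intros; apply Cmod_ge_0|].
    apply in_seq. split; [lia|]. simpl. apply Nat.mod_upper_bound. lia. }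
  destruct (Rle_dec (Cmod (chi n)) 1) as [Hle|Hgt]; [exact Hle|exfalso].
  assert (Habs : Rabs (Cmod (chi n)) > 1) by (rewrite Rabs_pos_eq by apply Cmod_ge_0; lra).
  destruct (Pow_x_infinity _ Habs (M + 1)) as [N HN].
  specialize (HN N (le_n N)). rewrite Rabs_pos_eq in HN by (apply pow_le, Cmod_ge_0).
  rewrite <- Cmod_pow, <- (dirichlet_character_pow q) in HN by exact Hchi.
  specialize (HM (n ^ N)%nat). lra.
Qed.

Lemma dirichlet_character_divisor q chi p : dirichlet_character q chi -> (2 <= p)%nat ->
  ndivb q p = false -> chi p = 0%C.
Proof.
  intros (Hq & _ & _ & _ & H0) Hp Hd. apply H0.
  unfold ndivb in Hd. apply Bool.negb_false_iff, Nat.eqb_eq, Nat.Lcm0.mod_divide in Hd.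
  apply Nat.divide_gcd_iff in Hd. lia.
Qed.

Lemma In_primes_upto y p : 2 <= y -> In p (primes_upto y) ->
  (2 <= p)%nat /\ (1 <= nu y p)%nat.
Proof.
  intros Hy Hin. unfold primes_upto in Hin. apply filter_In in Hin as [Hs Hpr].
  assert (Hp2 : (2 <= p)%nat).
  { unfold is_primeb in Hpr. destruct (prime_dec (Z.of_nat p)) as [Hp|]; [|discriminate].
    apply prime_ge_2 in Hp. lia. }
  assert (HP : 2 <= INR p) by (apply (le_INR 2); exact Hp2).
  apply in_seq in Hs.
  destruct (base_Int_part y) as [Hi1 Hi2].
  assert (HI : (-1 < Int_part y)%Z) by (apply lt_IZR; lra).
  assert (HpY : INR p <= y).
  { apply Rle_trans with (IZR (Int_part y)); [|exact Hi1].
    rewrite INR_IZR_INZ. apply IZR_le. lia. }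
  split; [exact Hp2|].
  assert (Hl : 0 < ln (INR p)) by (rewrite <- ln_1; apply ln_increasing; lra).
  assert (Hl2 : ln (INR p) <= ln y) by (apply ln_le; lra).
  assert (Hv : 1 <= ln y / ln (INR p)).
  { apply Rmult_le_reg_r with (ln (INR p)); [exact Hl|].
    unfold Rdiv. rewrite Rmult_assoc, Rinv_l by lra. lra. }
  destruct (base_Int_part (ln y / ln (INR p))) as [Hj1 Hj2].
  assert (HJ : (0 < Int_part (ln y / ln (INR p)))%Z) by (apply lt_IZR; lra).
  unfold nu. lia.
Qed.

Lemma prodR_pos l g : (forall p, In p l -> 0 < g p) -> 0 < prodR l g.
Proof.
  induction l as [|a l IH]; intros Hg; simpl; [lra|].
  apply Rmult_lt_0_compat; [apply Hg; left; reflexivity|].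
  apply IH. intros p Hp. apply Hg. right. exact Hp.
Qed.

Lemma Cmod_prodC_le_filter (P : nat -> bool) (c : R) (l : list nat) (f : nat -> C)
  (g h : nat -> R) :
  (forall p, In p l -> P p = false -> f p = 1%C) ->
  (forall p, In p l -> P p = true -> Cmod (f p) <= g p * exp (- c * h p)) ->
  Cmod (prodC l f) <= prodR (filter P l) g * exp (- c * sumR (filter P l) h).
Proof.
  induction l as [|a l IH]; intros Hout Hin; simpl.
  - rewrite Cmod_1, Rmult_0_r, exp_0. lra.
  - rewrite Cmod_mult.
    assert (IH' := IH (fun p Hp => Hout p (or_intror Hp)) (fun p Hp => Hin p (or_intror Hp))).
    destruct (P a) eqn:Ha; simpl.
    + replace (- c * (h a + sumR (filter P l) h))
        with (- c * h a + - c * sumR (filter P l) h) by ring.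
      rewrite exp_plus.
      replace (g a * prodR (filter P l) g * (exp (- c * h a) * exp (- c * sumR (filter P l) h)))
        with (g a * exp (- c * h a) * (prodR (filter P l) g * exp (- c * sumR (filter P l) h)))
        by ring.
      apply Rmult_le_compat; [apply Cmod_ge_0|apply Cmod_ge_0|apply Hin; [left|]; auto|exact IH'].
    + rewrite (Hout a (or_introl eq_refl) Ha), Cmod_1, Rmult_1_l. exact IH'.
Qed.

Lemma Zq_pos q b y : 0 < b -> 2 <= y -> 0 < Zq q b y.
Proof.
  intros Hb Hy. apply prodR_pos. intros p Hp. apply filter_In in Hp as [Hp _].
  apply euler_factorR_pos; [|exact Hb].
  apply (lt_INR 1), (In_primes_upto y p Hy Hp).
Qed.

Lemma Cmod_Zchi_le q chi y b t : dirichlet_character q chi -> 0 < b -> 2 <= y ->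
  Cmod (Zchi (b, t) chi y) <= Zq q b y * exp (- (1/32) * Wq q y t b chi).
Proof.
  intros Hchi Hb Hy.
  apply (Cmod_prodC_le_filter (ndivb q) (1/32) (primes_upto y)
           (fun p => euler_factor (chi p) (INR p) (nu y p) (b, t))).
  - intros p Hp Hd. destruct (In_primes_upto y p Hy Hp) as [Hp2 _].
    rewrite (dirichlet_character_divisor q chi p Hchi Hp2 Hd). apply euler_factor_0.
  - intros p Hp _. destruct (In_primes_upto y p Hy Hp) as [Hp2 Hnu].
    apply Cmod_euler_factor_le; [apply (lt_INR 1); exact Hp2|exact Hb| |exact Hnu].
    apply (dirichlet_character_Cmod_le_1 q). exact Hchi.
Qed.

Theorem mainTheorem11 :
  exists c0 c5 : R, 0 < c0 /\ 0 < c5 /\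
  forall (x y beta : R) (q : nat) (chi : nat -> C) (tau : R),
    2 <= y -> y <= x -> psi y > 2 * ln x ->
    is_beta x y beta ->
    INR q <= Rpower y (c0 / ln (ln y)) ->
    dirichlet_character q chi -> non_principal q chi ->
    Cmod (Cdiv (Zchi (beta, tau) chi y) (RtoC (Zq q beta y)))
      <= exp (- c5 * Wq q y tau beta chi).
Proof.
  exists 1, (1/32). split; [lra|]. split; [lra|].
  intros x y beta q chi tau Hy _ _ [Hbeta _] _ Hchi _.
  assert (HZ := Zq_pos q beta y Hbeta Hy).
  rewrite Cmod_div by (intros E; apply RtoC_inj in E; lra).
  rewrite Cmod_R, Rabs_pos_eq by lra.
  apply Rle_div_l; [exact HZ|].
  rewrite Rmult_comm. apply Cmod_Zchi_le; assumption.
Qed.
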